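(* Let $(M,\circ,\mathrm{OR})$ be a free $\mathbb{D}$-module of rank 3 with scalar product and orientation. Every real subspace $S\subset M$ all of whose nonzero elements are sliding vectors has real dimension at most 3, and the elements of $E$ are precisely the real subspaces of $M$ of real dimension 3 all of whose nonzero elements are sliding vectors.
   Context: $\mathbb{D}=\{a+\epsilon b: a,b\in\mathbb{R}\}$, $\epsilon^2=0$, $\mathfrak{Re}(a+\epsilon b)=a$, $\mathfrak{Du}(a+\epsilon b)=b$. A scalar product is a symmetric $\mathbb{D}$-bilinear $\circ:M\times M\to\mathbb{D}$ with $\mathfrak{Re}(x\circ x)\ge0$, equality iff $x\in\epsilon M$. $E$ is the set of real 3-dimensional subspaces $P\subset M$ with $\mathfrak{Du}(x\circ y)=0$ for all $x,y\in P$ and $P\cap\epsilon M=\{0\}$. A sliding vector is an element $z\in M\setminus\epsilon M$ with zero pitch, i.e. with $\mathfrak{Du}(z\circ z)=0$ (equivalently, writing $z=(a+\epsilon b)u$ with $a>0$, $b\in\mathbb{R}$, $u\circ u=1$, one has $b=0$). *)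

From HB Require Import structures.
From mathcomp Require Import all_boot all_order all_algebra.
From mathcomp Require Import reals.
Set Implicit Arguments. Unset Strict Implicit. Unset Printing Implicit Defensive.
Import Order.TTheory GRing.Theory Num.Theory.
Local Open Scope ring_scope.

(* Dual numbers D = {a + eps b} are represented as pairs (a, b) : R * R,
   so Re = fst and Du = snd. A D-module is a real vector space M together
   with a real-linear map eps : M -> M with eps \o eps = 0 (the action of
   the dual unit). *)

Section DualModule.
Variables (R : fieldType) (M : vectType R) (eps : M -> M).

Definition dRe (d : R * R) : R := d.1.
Definition dDu (d : R * R) : R := d.2.

Definition dmul (d e : R * R) : R * R := (d.1 * e.1, d.1 * e.2 + d.2 * e.1).
Definition dadd (d e : R * R) : R * R := (d.1 + e.1, d.2 + e.2).

Definition dscale (d : R * R) (x : M) : M := d.1 *: x + d.2 *: eps x.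

Definition in_epsM (x : M) : Prop := exists y, x = eps y.

Definition free_rank3 : Prop :=
  exists e : 'I_3 -> M, forall x : M,
    exists! c : {ffun 'I_3 -> R * R}, x = \sum_(i < 3) dscale (c i) (e i).

End DualModule.

Section ScalarProduct.
Variables (R : realFieldType) (M : vectType R) (eps : M -> M).

Definition is_scalar_product (sp : M -> M -> R * R) : Prop :=
  [/\ forall x y, sp x y = sp y x,
      forall (d : R * R) x y z,
        sp (dscale eps d x + y) z = dadd (dmul d (sp x z)) (sp y z),
      forall x, 0 <= dRe (sp x x) &
      forall x, dRe (sp x x) = 0 <-> in_epsM eps x].

Definition sliding (sp : M -> M -> R * R) (z : M) : Prop :=
  ~ in_epsM eps z /\ dDu (sp z z) = 0.

Definition in_E (sp : M -> M -> R * R) (P : {vspace M}) : Prop :=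
  [/\ \dim P = 3%N,
      forall x y, x \in P -> y \in P -> dDu (sp x y) = 0 &
      forall x, x \in P -> in_epsM eps x -> x = 0].

End ScalarProduct.

From HB Require Import structures.
From mathcomp Require Import all_boot all_order all_algebra.
From mathcomp Require Import reals.
Set Implicit Arguments. Unset Strict Implicit. Unset Printing Implicit Defensive.
Import Order.TTheory GRing.Theory Num.Theory.
Local Open Scope ring_scope.

(* If e_1, e_2, e_3 is a D-basis of M, then the eps e_i are R-independent and
   lie in eps M, while the e_i together with the eps e_i span M over R; so
   dim_R M <= 6 and dim_R (eps M) >= 3, and a subspace meeting eps M trivially,
   such as one consisting of sliding vectors, has dimension at most 3. For the
   description of E, the zero-pitch condition Du(z o z) = 0 on a subspace
   polarizes to Du(x o y) = 0 since 2 is invertible. *)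

Section DualBasis.
Variables (R : fieldType) (M : vectType R) (eps : {linear M -> M}) (e : 'I_3 -> M).
Hypothesis He : forall x : M,
  exists! c : {ffun 'I_3 -> R * R}, x = \sum_(i < 3) dscale eps (c i) (e i).

Let eps_e := [tuple eps (e i) | i < 3].

Lemma eps_e_nth (i : 'I_3) : eps_e`_i = eps (e i).
Proof. by rewrite -(tnth_nth 0) tnth_mktuple. Qed.

Lemma free_eps_e : free eps_e.
Proof.
apply/freeP => k k_eps_e0 i.
have zero_dcoords : (0 : M) =
    \sum_(j < 3) dscale eps ([ffun=> (0 : R, 0 : R)] j) (e j).
  by rewrite big1 // => j _; rewrite ffunE /dscale /= !scale0r addr0.
have k_dcoords : (0 : M) = \sum_(j < 3) dscale eps ([ffun j => (0, k j)] j) (e j).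
  rewrite -{1}k_eps_e0; apply: eq_bigr => j _.
  by rewrite ffunE /dscale /= scale0r add0r eps_e_nth.
have [c [_ c_uniq]] := He 0.
have := etrans (esym (c_uniq _ k_dcoords)) (c_uniq _ zero_dcoords).
by move/(congr1 (fun f : {ffun 'I_3 -> R * R} => (f i).2)); rewrite !ffunE.
Qed.

Lemma dim_span_eps_e : \dim <<eps_e>> = 3%N.
Proof. by move/eqP: free_eps_e; rewrite size_tuple. Qed.

Lemma span_eps_e_in_epsM x : x \in <<eps_e>>%VS -> in_epsM eps x.
Proof.
move=> x_span; exists (\sum_i coord eps_e i x *: e i).
rewrite linear_sum {1}(coord_span x_span); apply: eq_bigr => i _.
by rewrite linearZ eps_e_nth.
Qed.

Lemma dimvf_le6 : (\dim {:M} <= 6)%N.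
Proof.
pose s := [seq e i | i <- enum 'I_3] ++ [seq eps (e i) | i <- enum 'I_3].
apply: (@leq_trans (\dim <<s>>)).
  apply/dimvS/subvP => x _; have [c [-> _]] := He x.
  apply: memv_suml => i _; apply: memvD; apply/memvZ/memv_span;
    rewrite mem_cat; apply/orP; [left | right]; exact/map_f/mem_enum.
by apply: leq_trans (dim_span s) _; rewrite size_cat !size_map -enumT size_enum_ord.
Qed.

Lemma dimv_le3_of_epsM_trivial (S : {vspace M}) :
  (forall x, x \in S -> in_epsM eps x -> x = 0) -> (\dim S <= 3)%N.
Proof.
move=> S_epsM.
have disjoint_S : (S :&: <<eps_e>> = 0)%VS.
  apply/eqP; rewrite -subv0; apply/subvP => x /memv_capP [xS x_span].
  by rewrite memv0 (S_epsM x xS (span_eps_e_in_epsM x_span)).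
rewrite -(leq_add2r (\dim <<eps_e>>)) -dimv_disjoint_sum // dim_span_eps_e.
exact: leq_trans (dimvS (subvf _)) dimvf_le6.
Qed.

End DualBasis.

Section ZeroPitch.
Variables (R : realFieldType) (M : vectType R) (eps : M -> M).
Variable sp : M -> M -> R * R.
Hypothesis Hsp : is_scalar_product eps sp.

Lemma sp_addl x y z : sp (x + y) z = dadd (sp x z) (sp y z).
Proof.
have [_ sp_linear _ _] := Hsp.
have := sp_linear (1, 0) x y z.
rewrite /dscale /= scale1r scale0r addr0 => ->.
by rewrite /dmul /dadd /= !mul1r mul0r addr0.
Qed.

Lemma dDu_sp0l z : dDu (sp 0 z) = 0.
Proof.
have := congr1 (@dDu R) (sp_addl 0 0 z); rewrite addr0 /dadd /dDu /=.
by move=> twice; apply: (addrI (sp 0 z).2); rewrite addr0 -twice.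
Qed.

Lemma dDu_sp_polarization x y :
  dDu (sp (x + y) (x + y)) = dDu (sp x x) + dDu (sp x y) *+ 2 + dDu (sp y y).
Proof.
have [sp_sym _ _ _] := Hsp.
rewrite sp_addl (sp_sym x) (sp_sym y) !sp_addl (sp_sym y x) /dadd /dDu /=.
by rewrite mulr2n !addrA.
Qed.

Lemma sliding_subspaceP (P : {vspace M}) :
  (forall x, x \in P -> x != 0 -> sliding eps sp x) <->
  (forall x y, x \in P -> y \in P -> dDu (sp x y) = 0) /\
  (forall x, x \in P -> in_epsM eps x -> x = 0).
Proof.
split=> [P_sliding | [P_dDu0 P_epsM]]; last first.
  move=> x xP x_neq0; split; last exact: P_dDu0.
  by move/(P_epsM x xP)/eqP; rewrite (negPf x_neq0).
have pitch0 z : z \in P -> dDu (sp z z) = 0.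
  move=> zP; have [->|z_neq0] := eqVneq z 0; first exact: dDu_sp0l.
  by case: (P_sliding z zP z_neq0).
split=> [x y xP yP | x xP x_epsM]; last first.
  by apply/eqP/negPn/negP => /(P_sliding x xP) [].
have := pitch0 _ (memvD xP yP).
rewrite dDu_sp_polarization (pitch0 x xP) (pitch0 y yP) add0r addr0.
by move/eqP; rewrite mulrn_eq0 orFb => /eqP.
Qed.

End ZeroPitch.

Theorem proposition6 (R : realType) (M : vectType R) (eps : {linear M -> M})
    (sp : M -> M -> R * R)
    (Heps : forall x : M, eps (eps x) = 0)
    (Hfree : free_rank3 eps)
    (Hsp : is_scalar_product eps sp) :
  (forall S : {vspace M},
      (forall x, x \in S -> x != 0 -> sliding eps sp x) -> (\dim S <= 3)%N) /\
  (forall P : {vspace M},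
      in_E eps sp P <->
      (\dim P = 3%N /\ (forall x, x \in P -> x != 0 -> sliding eps sp x))).
Proof.
have [e He] := Hfree.
split=> [S /(sliding_subspaceP Hsp) [_ S_epsM] | P].
  exact: (dimv_le3_of_epsM_trivial He S_epsM).
rewrite (sliding_subspaceP Hsp P).
by split=> [[dimP P_dDu0 P_epsM] | [dimP [P_dDu0 P_epsM]]].
Qed.
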